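(* Let $n\in\mathbb{N}$, let $\chi$ be a red-blue colouring of $E(K_n)$, and let $P$ be a blue path in $K_n$. Let $Y=[n]\setminus V(P)$ and let $Y_0$ be the set of vertices $y\in Y$ such that no edge between $y$ and a vertex of $V(P)$ is blue. Then $$f(n,\chi)\leq 1+\left\lceil\frac{|Y\setminus Y_0|}{2}\right\rceil+|Y_0|<2+\frac{|Y|}{2}+\frac{|Y_0|}{2}.$$
   Context: $K_n$ is the complete graph on vertex set $[n]=\{1,\dots,n\}$. For a red-blue colouring $\chi$ of $E(K_n)$, $f(n,\chi)$ is the smallest size of a family of monochromatic paths, all of the same colour, whose union covers $[n]$; here paths may have length zero (a single vertex) and need not be disjoint. A blue path is one all of whose edges are blue. *)

From mathcomp Require Import all_boot all_order all_algebra.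
From Stdlib Require Import ClassicalEpsilon.
Set Implicit Arguments. Unset Strict Implicit. Unset Printing Implicit Defensive.

(* A red-blue colouring of E(K_n) is a
   symmetric function chi : 'I_n -> 'I_n -> bool, where [chi x y] is the colour
   of the edge xy (for x <> y); true = blue, false = red.  Diagonal values are
   irrelevant. *)
Definition blue : bool := true.
Definition red : bool := false.

Definition colouring (n : nat) (chi : 'I_n -> 'I_n -> bool) : Prop :=
  forall x y : 'I_n, chi x y = chi y x.

(* A single vertex is a path of length zero (of every colour). *)
Definition mono_path (n : nat) (chi : 'I_n -> 'I_n -> bool) (c : bool)
  (p : seq 'I_n) : bool :=
  match p with
  | [::] => false
  | x :: s => uniq p && path (fun u v => chi u v == c) x s
  end.

Definition blue_path n chi p := @mono_path n chi blue p.

Definition mono_cover (n : nat) (chi : 'I_n -> 'I_n -> bool) (k : nat) : Prop :=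
  exists (c : bool) (F : seq (seq 'I_n)),
    size F = k /\ all (mono_path chi c) F /\
    forall v : 'I_n, has (fun p => v \in p) F.

Definition mono_coverb n chi k : bool :=
  if excluded_middle_informative (@mono_cover n chi k) then true else false.

Lemma mono_coverb_exists n chi : exists k, @mono_coverb n chi k.
Proof.
exists n; rewrite /mono_coverb.
case: excluded_middle_informative => // H; exfalso; apply: H.
exists blue, [seq [:: v] | v <- enum 'I_n]; split; first by rewrite size_map size_enum_ord.
split; first by apply/allP => p /mapP [v _ ->].
move=> v; apply/hasP; exists [:: v]; last by rewrite inE.
by apply/mapP; exists v; rewrite ?mem_enum.
Qed.

Definition f (n : nat) (chi : 'I_n -> 'I_n -> bool) : nat :=
  ex_minn (@mono_coverb_exists n chi).

From Pilot Require Import Defs.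
From mathcomp Require Import all_boot all_order all_algebra lra.
From Stdlib Require Import ClassicalEpsilon.
Import Order.TTheory GRing.Theory Num.Theory.

Set Implicit Arguments.
Unset Strict Implicit.
Unset Printing Implicit Defensive.

(* Cover [n] by P, one singleton for each vertex of Y0, and blue paths
   through the vertices of Y \ Y0 taken two at a time: if y1 and y2 have blue
   neighbours x1 and x2 on P, then y1, the segment of P from x1 to x2, and y2
   form a blue path. *)

Section SymmetricPaths.

Variables (T : eqType) (r : rel T).
Hypothesis r_sym : symmetric r.

Lemma path_prefix_to x s y : uniq (x :: s) -> path r x s -> y \in x :: s ->
  exists2 t, [/\ uniq (x :: t), path r x t & last x t = y] & {subset t <= s}.
Proof.
move=> + + ys; case/splitPl: ys => t s2 last_t; rewrite -cat_cons cat_uniq cat_path.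
move=> /andP[ut _] /andP[pt _]; exists t => // z zt.
by rewrite mem_cat zt.
Qed.

Lemma path_segment p x1 x2 : uniq p -> sorted r p -> x1 \in p -> x2 \in p ->
  exists2 t, [/\ uniq (x1 :: t), path r x1 t & last x1 t = x2]
           & {subset x1 :: t <= p}.
Proof.
move=> + + x1p; case/splitPr: x1p => p1 p2.
rewrite sorted_cat_cons => up /andP[s1 s2].
rewrite mem_cat => /orP[x2_1 | x2_2].
- have u1 : uniq (x1 :: rev p1).
    by move: up; rewrite -cat_rcons cat_uniq -rev_rcons rev_uniq => /andP[].
  have {}s1 : path r x1 (rev p1).
    by rewrite -[path _ _ _]/(sorted r (x1 :: rev p1)) -rev_rcons rev_sorted
      (eq_sorted (fun y z => r_sym z y)).
  have x2_1' : x2 \in x1 :: rev p1 by rewrite inE mem_rev x2_1 orbT.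
  have [t seg sub] := path_prefix_to u1 s1 x2_1'; exists t => // z.
  by rewrite mem_cat !inE => /orP[-> | /sub]; rewrite ?mem_rev ?orbT // => ->.
- have u2 : uniq (x1 :: p2) by move: up; rewrite cat_uniq => /and3P[].
  have [t seg sub] := path_prefix_to u2 s2 x2_2; exists t => // z.
  by rewrite mem_cat !inE => /orP[-> | /sub ->]; rewrite ?orbT.
Qed.

Lemma path_via_segment p y1 y2 x1 x2 : uniq p -> sorted r p ->
  y1 \notin p -> y2 \notin p -> y1 != y2 ->
  x1 \in p -> x2 \in p -> r y1 x1 -> r y2 x2 ->
  exists2 s, uniq (y1 :: s) && path r y1 s & y2 \in s.
Proof.
move=> up sp y1p y2p y12 x1p x2p ry1 ry2.
have [t [ut pt last_t] sub] := path_segment up sp x1p x2p.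
have off_seg z : z \notin p -> z \notin x1 :: t by apply: contra (sub z).
exists (x1 :: rcons t y2); last by rewrite inE mem_rcons mem_head orbT.
rewrite -rcons_cons cons_uniq rcons_uniq mem_rcons inE negb_or y12 !off_seg //=.
by rewrite -cons_uniq ut ry1 rcons_path pt last_t r_sym ry2.
Qed.

End SymmetricPaths.

Lemma mono_pathE n (chi : 'I_n -> 'I_n -> bool) c p :
  Defs.mono_path chi c p = [&& p != [::], uniq p & sorted (fun u v => chi u v == c) p].
Proof. by case: p. Qed.

Lemma cover_by_pairs (T : eqType) (good : pred (seq T)) (A : {pred T}) :
  {in A &, forall y1 y2, exists2 q, good q & (y1 \in q) && (y2 \in q)} ->
  forall L, {subset L <= A} -> exists2 F, size F = uphalf (size L) &
    all good F /\ forall v, v \in L -> has (fun q => v \in q) F.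
Proof.
move=> pairs L; have [k] := ubnP (size L); elim: k L => // k IH.
case=> [|y1 [|y2 L]] /= size_L sub_A.
- by exists [::].
- have [q good_q /andP[y1q _]] := pairs _ _ (sub_A _ (mem_head _ _)) (sub_A _ (mem_head _ _)).
  by exists [:: q]; rewrite //= good_q; split=> // v; rewrite inE => /eqP ->; rewrite y1q.
- have [Ay1 Ay2] : y1 \in A /\ y2 \in A by split; apply: sub_A; rewrite !inE eqxx ?orbT.
  have [q good_q /andP[y1q y2q]] := pairs _ _ Ay1 Ay2.
  have [F size_F [good_F cover_F]] : exists2 F, size F = uphalf (size L) &
      all good F /\ forall v, v \in L -> has (fun q => v \in q) F.
    by apply: IH (ltnW size_L) _ => v vL; apply: sub_A; rewrite !inE vL !orbT.
  exists (q :: F); first by rewrite /= size_F.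
  split; first by rewrite /= good_q.
  by move=> v; rewrite !inE /= => /or3P[/eqP-> | /eqP-> | /cover_F->]; rewrite ?y1q ?y2q ?orbT.
Qed.

Lemma f_le_cover n (chi : 'I_n -> 'I_n -> bool) k : mono_cover chi k -> f chi <= k.
Proof.
move=> cover; rewrite /f; case: ex_minnP => m _; apply.
by rewrite /mono_coverb; case: excluded_middle_informative.
Qed.

Lemma f_le_partial_cover n (chi : 'I_n -> 'I_n -> bool) c F (S : {set 'I_n}) :
  all (Defs.mono_path chi c) F -> (forall v, v \notin S -> has (fun p => v \in p) F) ->
  f chi <= size F + #|S|.
Proof.
move=> mono_F cover_F; apply: f_le_cover.
exists c, (F ++ [seq [:: v] | v <- enum S]); split; first by rewrite size_cat size_map -cardE.
split; first by rewrite all_cat mono_F; apply/allP => _ /mapP[v _ ->].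
move=> v; rewrite has_cat; case: (boolP (v \in S)) => [vS | /cover_F -> //].
by apply/orP; right; apply/hasP; exists [:: v]; rewrite ?mem_head ?map_f ?mem_enum.
Qed.

Lemma uphalf_bound (R : realFieldType) a b :
  ((1 + uphalf a + b)%:R < 2 + (a + b)%:R / 2 + b%:R / 2 :> R)%R.
Proof.
have : (uphalf a).*2 <= a.+1 by rewrite uphalfK; case: odd.
by rewrite -muln2 -(ler_nat R) !natrD natrM => ?; lra.
Qed.

Theorem lemma3p3 (n : nat) (chi : 'I_n -> 'I_n -> bool) (P : seq 'I_n) :
  colouring chi -> blue_path chi P ->
  let VP := [set x : 'I_n | x \in P] in
  let Y := ~: VP in
  let Y0 := [set y in Y | [forall x in VP, chi y x != blue]] in
  (f chi <= 1 + uphalf #|Y :\: Y0| + #|Y0|)%N /\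
  ((1 + uphalf #|Y :\: Y0| + #|Y0|)%:R <
     (2 + #|Y|%:R / 2 + #|Y0|%:R / 2 : rat))%R.
Proof.
move=> chi_sym blueP VP Y Y0; split; last first.
  have Y0_sub : Y0 \subset Y by apply/subsetP => y; rewrite inE => /andP[].
  have cardY : #|Y| = #|Y :\: Y0| + #|Y0|.
    by rewrite -(cardsID Y0 Y) (setIidPr Y0_sub) addnC.
  by rewrite cardY uphalf_bound.
pose r u v := chi u v == blue.
have r_sym : symmetric r by move=> u v; rewrite /r chi_sym.
have [uP sP] : uniq P /\ sorted r P.
  by move: blueP; rewrite /blue_path mono_pathE => /and3P[_ -> ->].
have blue_nbr y : y \in Y :\: Y0 -> y \notin P /\ exists2 x, x \in P & r y x.
  rewrite !inE => /andP[+ yP]; rewrite yP => /forallPn[x].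
  by rewrite negb_imply negbK inE => /andP[xP ryx]; split; last exists x.
have pairs y1 y2 : y1 \in Y :\: Y0 -> y2 \in Y :\: Y0 ->
    exists2 q, blue_path chi q & (y1 \in q) && (y2 \in q).
  have [<- _ _ | y12 /blue_nbr[y1P [x1 x1P r1]] /blue_nbr[y2P [x2 x2P r2]]] := eqVneq y1 y2.
    by exists [:: y1]; rewrite //= mem_head.
  have [s blue_s y2s] := path_via_segment r_sym uP sP y1P y2P y12 x1P x2P r1 r2.
  by exists (y1 :: s); [exact: blue_s | rewrite mem_head inE y2s orbT].
have enum_sub : {subset enum (Y :\: Y0) <= Y :\: Y0} by move=> y; rewrite mem_enum.
have [F size_F [blue_F cover_F]] := cover_by_pairs pairs enum_sub.
have := f_le_partial_cover (c := blue) (F := P :: F) (S := Y0).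
rewrite /= size_F -cardE add1n; apply; first exact/andP.
move=> v vY0 /=; case vP: (v \in P) => //=.
by rewrite cover_F // mem_enum in_setD vY0 /Y /VP in_setC inE vP.
Qed.
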